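(* Let $q\in\mathbb{C}\setminus\{0\}$ and assume $q^{2j}\neq1$ for $2\le j\le n$. Then the idempotents $p_{(n)}$ and $p_{(1^n)}$ of the Hecke algebra $H_n\subset G_n[0]$ are minimal idempotents of $G_n[0]$, i.e. $p\,G_n[0]\,p=\mathbb{C}p$ for $p\in\{p_{(n)},p_{(1^n)}\}$.
   Context: For $q\in\mathbb{C}\setminus\{0\}$ the Hecke–Clifford algebra $G_n$ is the complex algebra generated by $t_1,\dots,t_{n-1}$ and $v_1,\dots,v_n$ subject to: braid relations $t_jt_{j+1}t_j=t_{j+1}t_jt_{j+1}$, $t_it_j=t_jt_i$ ($|i-j|\ge2$); $t_j-t_j^{-1}=q-q^{-1}$; $v_jv_k+v_kv_j=2\delta_{jk}$; $t_jv_j=v_{j+1}t_j$, $t_jv_{j+1}=v_jt_j-(q-q^{-1})(v_j-v_{j+1})$, $t_jv_l=v_lt_j$ for $l\neq j,j+1$. $G_n[0]$ is the subalgebra fixed by the automorphism $v_j\mapsto -v_j$, $t_j\mapsto t_j$. $H_n\subset G_n[0]$ is the subalgebra generated by the $t_j$ (the Hecke algebra of type $A_{n-1}$). Under the assumption $q^{2j}\neq 1$ for $2\le j\le n$, $H_n$ has minimal central idempotents $p_{(n)}$ and $p_{(1^n)}$ characterized by $t_jp_{(n)}=qp_{(n)}$ and $t_jp_{(1^n)}=-q^{-1}p_{(1^n)}$ for all $1\le j<n$. *)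

(* The complex numbers are modelled as R[i] for an
   arbitrary R : realType (any realType is a model of the real numbers). *)
From mathcomp Require Import all_boot all_algebra.
From mathcomp Require Import reals complex.
Set Implicit Arguments.
Unset Strict Implicit.
Unset Printing Implicit Defensive.
Import GRing.Theory.
Local Open Scope ring_scope.

(* Letters of words in the generators of the Hecke-Clifford algebra G_n. *)
Inductive hc_letter := LT of nat | LV of nat.

Section HC.
Variables (K : fieldType) (A : algType K) (n : nat) (t v : nat -> A).

Definition hc_valid (l : hc_letter) : bool :=
  match l with LT j => (1 <= j < n)%N | LV j => (1 <= j <= n)%N end.

Definition hc_isV (l : hc_letter) : bool := if l is LV _ then true else false.

Definition hc_eval_letter (l : hc_letter) : A :=
  match l with LT j => t j | LV j => v j end.

Definition hc_eval (w : seq hc_letter) : A := \prod_(l <- w) hc_eval_letter l.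

Definition in_word_span (P : seq hc_letter -> bool) (x : A) : Prop :=
  exists s : seq (K * seq hc_letter),
    all (fun cw => P cw.2) s /\ x = \sum_(cw <- s) cw.1 *: hc_eval cw.2.

(* G_n[0]: spanned by words with an even number of v's *)
Definition even_word (w : seq hc_letter) : bool :=
  all hc_valid w && ~~ odd (count hc_isV w).
Definition in_Gn0 := in_word_span even_word.

(* H_n: spanned by words in the t_j only *)
Definition hecke_word (w : seq hc_letter) : bool :=
  all hc_valid w && ~~ has hc_isV w.
Definition in_Hn := in_word_span hecke_word.

Definition hc_relations (q : K) : Prop :=
  [/\ (forall j, (1 <= j)%N -> (j.+1 < n)%N ->
         t j * t j.+1 * t j = t j.+1 * t j * t j.+1),
      (forall i j, (1 <= i < n)%N -> (1 <= j < n)%N -> (j.+2 <= i \/ i.+2 <= j)%N ->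
         t i * t j = t j * t i),
      (forall j, (1 <= j < n)%N ->
         exists u : A, [/\ t j * u = 1, u * t j = 1 & t j - u = (q - q^-1) *: 1]),
      (forall j k, (1 <= j <= n)%N -> (1 <= k <= n)%N ->
         v j * v k + v k * v j = (if j == k then 2 else 0) *: 1)
    & (forall j, (1 <= j < n)%N ->
         [/\ t j * v j = v j.+1 * t j,
             t j * v j.+1 = v j * t j - (q - q^-1) *: (v j - v j.+1)
           & forall l, (1 <= l <= n)%N -> l != j -> l != j.+1 ->
               t j * v l = v l * t j])].

Definition minimal_in_Gn0 (p : A) : Prop :=
  forall y : A, (exists x, in_Gn0 x /\ y = p * x * p) <-> (exists c : K, y = c *: p).

End HC.

From mathcomp Require Import all_boot all_algebra.
From mathcomp Require Import reals complex.
From mathcomp Require Import ring zify.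
Set Implicit Arguments.
Unset Strict Implicit.
Unset Printing Implicit Defensive.
Import GRing.Theory Num.Theory.
Local Open Scope ring_scope.

(* Since t_j p = q p, the q-symmetrizer E of H_n satisfies E p = [n]!_{q^2} p,
   and [n]!_{q^2} != 0 by the hypothesis on q; since also E t_j = q E and p is in
   H_n, E p is a multiple of E, so p is a multiple of E and p t_j = q p as well.
   An element of G_n[0] is a combination of words with evenly many v's, and
   pushing the t's of such a word w to the right (they act on p by q) writes w p
   as a combination of v_u p with |u| even.  It remains to show p v_u p in K p,
   by induction on |u|: modulo shorter sandwiches the v's anticommute, a repeated
   index cancels since v_a^2 = 1, absorbing t_a on both sides replaces an index a
   by a+1 when a+1 does not occur, and the relations give
   (q + q^-1) p v_a v_(a+1) W p = (q - q^-1) p W p, where q + q^-1 != 0 as q^4 != 1.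
   For p_(1^n) replace q by -q^-1, which leaves the relations unchanged. *)

Lemma perm_to_front (T : eqType) (X : seq T) a Y : perm_eq (X ++ a :: Y) (a :: X ++ Y).
Proof. by rewrite (perm_catCA X [:: a] Y). Qed.

Lemma not_uniq_split (T : eqType) (u : seq T) :
  ~~ uniq u -> exists X a Y Z, u = X ++ a :: Y ++ a :: Z.
Proof.
elim: u => [|b u IHu] //=; rewrite negb_and negbK => /orP [/splitPr [Y Z] | /IHu].
  by exists [::], b, Y, Z.
by move=> [X [a [Y [Z ->]]]]; exists (b :: X), a, Y, Z.
Qed.

Section QNumbers.
Variables (R : idomainType) (q : R).

(* [qint m] is [m+1]_{q^2} = 1 + q^2 + ... + q^(2m) and [qfact m] is [m]!_{q^2}. *)
Fixpoint qint m : R := if m is m'.+1 then 1 + q * q * qint m' else 1.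

Fixpoint qfact m : R := if m is m'.+1 then qfact m' * qint m' else 1.

Lemma qint_subr m : qint m * (1 - q ^+ 2) = 1 - q ^+ (2 * m.+1).
Proof.
elim: m => [|m IHm] /=; first by rewrite mul1r muln1.
by rewrite mulrDl mul1r -mulrA IHm [in RHS]mulnS [in RHS]exprD; ring.
Qed.

Lemma qfact_neq0 n : (forall j, (2 <= j <= n)%N -> q ^+ (2 * j) != 1) ->
  forall m, (m <= n)%N -> qfact m != 0.
Proof.
move=> q_not_root; elim=> [|m IHm] m_n /=; first exact: oner_neq0.
rewrite mulf_neq0 ?IHm ?(ltnW m_n) //; case: m {IHm} m_n => [|m] m_n.
  exact: oner_neq0.
apply: contra (q_not_root m.+2 m_n) => /eqP qint0.
by rewrite eq_sym -subr_eq0 -qint_subr qint0 mul0r.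
Qed.

End QNumbers.

Section Multiples.
Variables (R : pzRingType) (V : lmodType R) (p : V).

Definition in_Kp (y : V) : Prop := exists c : R, y = c *: p.

Lemma in_Kp0 : in_Kp 0.
Proof. by exists 0; rewrite scale0r. Qed.

Lemma in_KpD x y : in_Kp x -> in_Kp y -> in_Kp (x + y).
Proof. by move=> [a ->] [b ->]; exists (a + b); rewrite scalerDl. Qed.

Lemma in_KpZ c x : in_Kp x -> in_Kp (c *: x).
Proof. by move=> [a ->]; exists (c * a); rewrite scalerA. Qed.

Lemma in_KpN x : in_Kp x -> in_Kp (- x).
Proof. by rewrite -scaleN1r; apply: in_KpZ. Qed.

Lemma in_KpD_iff x y : in_Kp (x + y) -> in_Kp x <-> in_Kp y.
Proof.
move=> hxy; split=> [hx | hy].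
  by rewrite -(addKr x y); apply: in_KpD; first exact: in_KpN.
by rewrite -(addrK y x); apply: in_KpD; last exact: in_KpN.
Qed.

End Multiples.

Section HeckeClifford.
Variables (K : numFieldType) (A : algType K) (n : nat) (t v : nat -> A) (q : K).
Hypothesis rels : hc_relations n t v q.

Lemma hc_tsq j : (1 <= j < n)%N -> t j * t j = (q - q^-1) *: t j + 1.
Proof.
case: rels => _ _ tinv _ _ /tinv [u [tu _ /eqP]].
rewrite subr_eq addrC -subr_eq => /eqP u_def.
move: tu; rewrite -u_def mulrBr -scalerAr mulr1 => /eqP.
by rewrite subr_eq addrC => /eqP.
Qed.

Lemma hc_vsq j : (1 <= j <= n)%N -> v j * v j = 1.
Proof.
case: rels => _ _ _ vrel _ hj; have := vrel j j hj hj.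
rewrite eqxx -mulr2n -scaler_nat => /(congr1 ( *:%R 2^-1)).
by rewrite !scalerA mulVf ?pnatr_eq0 // !scale1r.
Qed.

Lemma hc_tC i j : (1 <= j)%N -> (j.+2 <= i)%N -> (i < n)%N -> t i * t j = t j * t i.
Proof.
by case: rels => _ tfar _ _ _ *; apply: tfar; [lia | lia | left].
Qed.

(* [coset_sum m] = 1 + q t_m + q^2 t_m t_(m-1) + ... + q^m t_m ... t_1 and
   [symmetrizer m] = coset_sum 0 * ... * coset_sum (m-1), the q-symmetrizer of H_m. *)
Fixpoint coset_sum m : A := if m is m'.+1 then 1 + q *: (t m * coset_sum m') else 1.

Fixpoint symmetrizer m : A := if m is m'.+1 then symmetrizer m' * coset_sum m' else 1.

Lemma t_coset_sumC j k : (j.+2 <= k)%N -> (k < n)%N ->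
  t k * coset_sum j = coset_sum j * t k.
Proof.
elim: j => [|j IHj] jk k_n /=; first by rewrite mulr1 mul1r.
rewrite mulrDr mulrDl mulr1 mul1r -scalerAr -scalerAl mulrA hc_tC //.
by rewrite -mulrA IHj ?(ltnW jk) // mulrA.
Qed.

Hypothesis q_neq0 : q != 0.
Hypothesis q_not_root : forall j, (2 <= j <= n)%N -> q ^+ (2 * j) != 1.

Lemma qaddV_neq0 : (1 < n)%N -> q + q^-1 != 0.
Proof.
move=> n_gt1; apply: contraNneq (@q_not_root 2 n_gt1) => qaddV0.
have qq : q ^+ 2 = -1.
  by apply/eqP; rewrite -addr_eq0 expr2 -(mulfV q_neq0) -mulrDr qaddV0 mulr0.
by rewrite exprM qq sqrrN expr1n.
Qed.

Lemma mul_coset_sum_t_last Z m : (1 <= m < n)%N ->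
  (forall j, (1 <= j < m)%N -> Z * t j = q *: Z) ->
  Z * coset_sum m * t m = q *: (Z * coset_sum m).
Proof.
case: m => [|[|m]] // /andP [_ m_n] Zt /=.
  rewrite mulr1 mulrDr mulr1 mulrDl -scalerAr -scalerAl -mulrA hc_tsq //.
  rewrite mulrDr mulr1 -scalerAr !scalerDr !scalerA addrCA -{2}[Z * t 1]scale1r.
  by rewrite addrA -scalerDl addrC; congr (_ + _ *: _); field.
(* The braid relation for t_(m+1), t_(m+2) and 1 + q (q - q^-1) = q^2. *)
set M := m.+2.
have braid : Z * t M * t m.+1 * t M = q *: (Z * t M * t m.+1).
  case: rels => tbraid _ _ _ _.
  by rewrite -!mulrA (mulrA (t M)) -tbraid // !mulrA Zt ?ltnSn // -!scalerAl.
have tsq : Z * t M * t M = (q - q^-1) *: (Z * t M) + Z.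
  by rewrite -mulrA hc_tsq // mulrDr mulr1 -scalerAr.
have tX : coset_sum m * t M = t M * coset_sum m by rewrite t_coset_sumC.
do 3 rewrite ?(mulrDr, mulrDl, mulr1, mul1r, scalerDr) -?scalerAr -?scalerAl ?mulrA.
rewrite tsq -(mulrA _ (coset_sum m)) tX mulrA braid -scalerAl !scalerDr !scalerA.
rewrite !addrA -{1}[Z * t M]scale1r -scalerDl; congr (_ + _); rewrite addrC.
by congr (_ + _ *: _); field.
Qed.

Lemma mul_coset_sum_t Z m k : (m < n)%N ->
  (forall j, (1 <= j < m)%N -> Z * t j = q *: Z) -> (1 <= k <= m)%N ->
  Z * coset_sum m * t k = q *: (Z * coset_sum m).
Proof.
elim: m Z => [|m IHm] Z m_n Zt /andP [k1]; first by rewrite leqn0 => /eqP k0; subst.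
rewrite leq_eqVlt => /orP [/eqP -> | km]; first exact: mul_coset_sum_t_last.
have Z't j : (1 <= j < m)%N -> Z * t m.+1 * t j = q *: (Z * t m.+1).
  move=> hj; rewrite -mulrA hc_tC; try lia.
  by rewrite mulrA Zt -?scalerAl //; lia.
rewrite /= mulrDr mulr1 mulrDl Zt; last lia.
rewrite -scalerAr -scalerAl !mulrA IHm ?(ltnW m_n) //; last lia.
by rewrite scalerDr.
Qed.

Lemma symmetrizer_t m j : (m <= n)%N -> (1 <= j < m)%N ->
  symmetrizer m * t j = q *: symmetrizer m.
Proof.
elim: m j => [|m IHm] j m_n hj /=; first by rewrite ltn0 andbF in hj.
apply: mul_coset_sum_t => [//| i hi |]; first exact: IHm i (ltnW m_n) hi.
by case/andP: hj => -> /=.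
Qed.

Lemma symmetrizer_hecke_word w : hecke_word n w ->
  symmetrizer n * hc_eval t v w = q ^+ size w *: symmetrizer n.
Proof.
elim: w => [|l w IHw]; first by rewrite /hc_eval big_nil mulr1 scale1r.
rewrite /hecke_word /hc_eval big_cons -/(hc_eval t v w) /=.
case: l => [j|a] /=; last by rewrite andbF.
case/andP => /andP [hj hw] hv; rewrite mulrA symmetrizer_t // -scalerAl IHw.
  by rewrite scalerA exprS.
by rewrite /hecke_word hw hv.
Qed.

Definition vword (u : seq nat) : A := \prod_(a <- u) v a.

Definition vvalid (u : seq nat) : bool := all (fun a => 1 <= a <= n)%N u.

Lemma vvalid_cons a u : vvalid (a :: u) = (1 <= a <= n)%N && vvalid u.
Proof. by []. Qed.

Lemma vvalid_cat u1 u2 : vvalid (u1 ++ u2) = vvalid u1 && vvalid u2.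
Proof. exact: all_cat. Qed.

Lemma perm_vvalid u1 u2 : perm_eq u1 u2 -> vvalid u1 = vvalid u2.
Proof. exact: perm_all. Qed.

Lemma vword_cons a u : vword (a :: u) = v a * vword u.
Proof. by rewrite /vword big_cons. Qed.

Lemma vword_cat u1 u2 : vword (u1 ++ u2) = vword u1 * vword u2.
Proof. by rewrite /vword big_cat. Qed.

Definition raise (a x : nat) : nat := if x == a then a.+1 else x.

Lemma vvalid_raise a u : (a < n)%N -> vvalid u -> vvalid (map (raise a) u).
Proof.
move=> a_n /allP hu; apply/allP => _ /mapP [x xu ->]; rewrite /raise.
by case: eqP => [_|_]; [lia | exact: hu].
Qed.

Lemma uniq_raise a u : a.+1 \notin u -> uniq u -> uniq (map (raise a) u).
Proof.
move=> a1u hu; rewrite map_inj_in_uniq // => x y xu yu; rewrite /raise.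
case: eqP => [xa | _]; case: eqP => [ya | _] //; first by rewrite xa ya.
  by move=> a1y; rewrite a1y yu in a1u.
by move=> xa1; rewrite -xa1 xu in a1u.
Qed.

Lemma t_vword_raise a u : (1 <= a < n)%N -> vvalid u -> a.+1 \notin u ->
  t a * vword u = vword (map (raise a) u) * t a.
Proof.
move=> ha; case: rels => _ _ _ _ /(_ a ha) [tv _ tvl].
elim: u => [|x u IHu /andP [vx vu]]; first by rewrite /vword !big_nil mulr1 mul1r.
rewrite inE negb_or eq_sym => /andP [xa1 a1u] /=.
rewrite !vword_cons mulrA /raise; case: (eqVneq x a) => [-> | xa].
  by rewrite tv -!mulrA IHu.
by rewrite tvl // -!mulrA IHu.
Qed.

Section Eigenvector.
Variable p : A.
Hypothesis tp : forall j, (1 <= j < n)%N -> t j * p = q *: p.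

Lemma coset_sum_eigen m : (m < n)%N -> coset_sum m * p = qint q m *: p.
Proof.
elim: m => [|m IHm] m_n /=; first by rewrite mul1r scale1r.
rewrite mulrDl mul1r -scalerAl -(mulrA (t _)) IHm ?(ltnW m_n) // -scalerAr tp //.
by rewrite !scalerA -{1}[p]scale1r -scalerDl mulrAC.
Qed.

Lemma symmetrizer_eigen m : (m <= n)%N -> symmetrizer m * p = qfact q m *: p.
Proof.
elim: m => [|m IHm] m_n /=; first by rewrite mul1r scale1r.
rewrite -mulrA coset_sum_eigen // -scalerAr IHm ?(ltnW m_n) // scalerA.
by rewrite mulrC.
Qed.

Lemma hecke_eigen_right : in_Hn n t v p ->
  forall j, (1 <= j < n)%N -> p * t j = q *: p.
Proof.
move=> [s [hs p_def]] j hj; set E := symmetrizer n.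
have Ep : E * p = (\sum_(cw <- s) cw.1 * q ^+ size cw.2) *: E.
  rewrite {1}p_def mulr_sumr scaler_suml; elim: s hs {p_def} => [|cw s IHs].
    by rewrite !big_nil.
  rewrite /= !big_cons => /andP [hw /IHs ->].
  by rewrite -scalerAr symmetrizer_hecke_word // scalerA.
have fact_n0 := qfact_neq0 q_not_root (leqnn n).
have -> : p = ((qfact q n)^-1 * \sum_(cw <- s) cw.1 * q ^+ size cw.2) *: E.
  by rewrite -scalerA -Ep symmetrizer_eigen // scalerA mulVf // scale1r.
by rewrite -scalerAl symmetrizer_t // !scalerA mulrC.
Qed.

Definition vspan k (y : A) : Prop :=
  exists s : seq (K * seq nat),
    all (fun cu => (size cu.2 == k) && vvalid cu.2) s /\
    y = \sum_(cu <- s) cu.1 *: (vword cu.2 * p).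

Lemma vspan0 k : vspan k 0.
Proof. by exists [::]; rewrite big_nil. Qed.

Lemma vspanD k x y : vspan k x -> vspan k y -> vspan k (x + y).
Proof.
by move=> [s1 [h1 ->]] [s2 [h2 ->]]; exists (s1 ++ s2); rewrite all_cat h1 h2 big_cat.
Qed.

Lemma vspanZ k c y : vspan k y -> vspan k (c *: y).
Proof.
move=> [s [hs ->]]; exists [seq (c * cu.1, cu.2) | cu <- s]; rewrite all_map.
split; first exact: sub_all hs.
by rewrite big_map scaler_sumr; apply: eq_bigr => cu _; rewrite scalerA.
Qed.

Lemma vspanB k x y : vspan k x -> vspan k y -> vspan k (x - y).
Proof. by move=> hx hy; apply: vspanD => //; rewrite -scaleN1r; apply: vspanZ. Qed.

Lemma vspan_vword u : vvalid u -> vspan (size u) (vword u * p).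
Proof. by move=> hu; exists [:: (1, u)]; rewrite /= eqxx hu big_seq1 scale1r. Qed.

Lemma vspan_vl k a y : (1 <= a <= n)%N -> vspan k y -> vspan k.+1 (v a * y).
Proof.
move=> ha [s [hs ->]]; exists [seq (cu.1, a :: cu.2) | cu <- s]; split.
  by rewrite all_map; apply: sub_all hs => cu /andP [/eqP /= -> ->]; rewrite eqxx ha.
rewrite big_map mulr_sumr; apply: eq_bigr => cu _.
by rewrite -scalerAr vword_cons mulrA.
Qed.

Lemma vspan_t_vword j u : (1 <= j < n)%N -> vvalid u ->
  vspan (size u) (t j * (vword u * p)).
Proof.
move=> hj; case: rels => _ _ _ _ /(_ j hj) [tv tv1 tvl].
have vj : (1 <= j <= n)%N by case/andP: hj => -> /ltnW.
have vj1 : (1 <= j.+1 <= n)%N by case/andP: hj.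
elim: u => [_|a u IHu /andP [va hu]] /=.
  have := vspanZ q (@vspan_vword [::] isT).
  by rewrite /vword big_nil !mul1r tp.
rewrite vword_cons -mulrA mulrA; case: (eqVneq a j) => [-> | aj].
  by rewrite tv -mulrA; apply/vspan_vl/IHu.
case: (eqVneq a j.+1) => [-> | aj1]; last by rewrite tvl // -mulrA; apply/vspan_vl/IHu.
rewrite tv1 mulrBl -mulrA -scalerAl mulrBl.
apply: vspanB; first exact: vspan_vl (IHu hu).
by apply/vspanZ; apply: vspanB; apply: vspan_vl => //; apply: vspan_vword.
Qed.

Lemma vspan_tl k j y : (1 <= j < n)%N -> vspan k y -> vspan k (t j * y).
Proof.
move=> hj [s [hs ->]]; rewrite mulr_sumr big_seq.
apply: (big_ind (vspan k)) => [|x z|cu /(allP hs) /andP [/eqP <- hu]].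
- exact: vspan0.
- exact: vspanD.
- by rewrite -scalerAr; apply/vspanZ/vspan_t_vword.
Qed.

Lemma vspan_hc_eval w : all (hc_valid n) w ->
  vspan (count hc_isV w) (hc_eval t v w * p).
Proof.
elim: w => [_|l w IHw /andP [hl hw]].
  by have := @vspan_vword [::] isT; rewrite /vword /hc_eval !big_nil.
rewrite /hc_eval big_cons -/(hc_eval t v w) -mulrA.
case: l hl => j hj /=; first by rewrite add0n; apply/vspan_tl/IHw.
by rewrite add1n; apply/vspan_vl/IHw.
Qed.

Section Sandwich.
Hypothesis pt : forall j, (1 <= j < n)%N -> p * t j = q *: p.

Definition sandwich (u : seq nat) : A := p * vword u * p.

Lemma sandwich_swap X a b Y : (1 <= a <= n)%N -> (1 <= b <= n)%N ->
  sandwich (X ++ a :: b :: Y) + sandwich (X ++ b :: a :: Y) =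
  (if a == b then 2 else 0) *: sandwich (X ++ Y).
Proof.
case: rels => _ _ _ vrel _ ha hb.
have vab : vword (a :: b :: Y) + vword (b :: a :: Y) =
    (if a == b then 2 else 0) *: vword Y.
  by rewrite !vword_cons !mulrA -mulrDl vrel // -scalerAl mul1r.
by rewrite /sandwich !vword_cat -mulrDl -!mulrDr vab -!scalerAr -scalerAl.
Qed.

Lemma absorb_tl j x : (1 <= j < n)%N -> p * (t j * x) * p = q *: (p * x * p).
Proof. by move=> hj; rewrite mulrA pt // -!scalerAl. Qed.

Lemma absorb_tr j x : (1 <= j < n)%N -> p * (x * t j) * p = q *: (p * x * p).
Proof. by move=> hj; rewrite -mulrA -(mulrA x) tp // -!scalerAr mulrA. Qed.

Lemma sandwich_raise a u : (1 <= a < n)%N -> vvalid u -> a.+1 \notin u ->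
  sandwich u = sandwich (map (raise a) u).
Proof.
move=> ha hu a1u; apply: (scalerI q_neq0).
by rewrite /sandwich -(absorb_tl _ ha) -(absorb_tr _ ha) t_vword_raise.
Qed.

Lemma in_Kp_sandwich_pair a Z : (1 <= a < n)%N -> vvalid Z -> a \notin Z ->
  a.+1 \notin Z -> in_Kp p (sandwich Z) -> in_Kp p (sandwich [:: a, a.+1 & Z]).
Proof.
move=> ha hZ aZ a1Z hsZ; case: rels => _ _ _ vrel /(_ a ha) [tv tv1 _].
have va : (1 <= a <= n)%N by case/andP: ha => -> /ltnW.
have va1 : (1 <= a.+1 <= n)%N by case/andP: ha.
set c := q - q^-1; set W := vword Z; set V := v a * (v a.+1 * W).
have tW : t a * W = W * t a.
  rewrite /W t_vword_raise // map_id_in // => x xZ.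
  by rewrite /raise; case: eqP => // xa; rewrite -xa xZ in aZ.
have anti : v a.+1 * v a = - (v a * v a.+1).
  by apply/eqP; rewrite -addr_eq0 addrC vrel // ltn_eqF ?scale0r.
have tV : t a * V = c *: V + c *: W - V * t a.
  rewrite /V mulrA tv -(mulrA (v a.+1)) (mulrA (t a)) tv1 mulrBl mulrBr.
  rewrite -(mulrA (v a) (t a)) tW -scalerAl -scalerAr mulrBl mulrBr !mulrA.
  by rewrite hc_vsq // mul1r anti !mulNr scalerBr scalerN opprD !opprK addrC.
have GV : sandwich [:: a, a.+1 & Z] = p * V * p by rewrite /sandwich !vword_cons.
(* The t_a's of t_a V + V t_a = c V + c W are absorbed by p on either side. *)
have qG : (q + q^-1) *: (p * V * p) = c *: sandwich Z.
  have -> : q + q^-1 = q + q - c by rewrite /c; ring.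
  rewrite scalerBl scalerDl -{1}(absorb_tl _ ha) -(absorb_tr _ ha).
  rewrite -mulrDl -mulrDr tV subrK.
  by rewrite mulrDr mulrDl -!scalerAr -!scalerAl addrC addKr.
have n_gt1 : (1 < n)%N by case/andP: ha => /leq_ltn_trans; apply.
rewrite GV -[p * V * p]scale1r -(mulVf (qaddV_neq0 n_gt1)) -scalerA qG.
by apply/in_KpZ/in_KpZ.
Qed.

Section Reduction.
Variable k : nat.
Hypothesis IHk : forall u, size u = k -> vvalid u -> in_Kp p (sandwich u).

(* Modulo sandwiches of length k, swapping two adjacent indices only changes
   the sign (sandwich_swap). *)
Lemma in_Kp_sandwich_move P X a Y :
  size (P ++ X ++ a :: Y) = k.+2 -> vvalid (P ++ X ++ a :: Y) ->
  in_Kp p (sandwich (P ++ X ++ a :: Y)) <-> in_Kp p (sandwich (P ++ a :: X ++ Y)).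
Proof.
elim: X P => [//|x X IHX] P hs hv.
have := IHX (rcons P x); rewrite !cat_rcons => /(_ hs hv) {}IHX.
apply: (iff_trans IHX); apply: in_KpD_iff.
move: hv; rewrite !(vvalid_cat, vvalid_cons) => /and4P [vP /andP [vx vX] va vY].
rewrite sandwich_swap //; apply/in_KpZ/IHk; last by rewrite !vvalid_cat vP vX vY.
by move: hs; rewrite !size_cat /= ?size_cat /=; lia.
Qed.

Lemma in_Kp_sandwich_dup X a Y Z :
  size (X ++ a :: Y ++ a :: Z) = k.+2 -> vvalid (X ++ a :: Y ++ a :: Z) ->
  in_Kp p (sandwich (X ++ a :: Y ++ a :: Z)).
Proof.
move=> hs hv; move: (hv); rewrite !(vvalid_cat, vvalid_cons) => /and5P [vX va vY _ vZ].
have := @in_Kp_sandwich_move [::] (X ++ a :: Y) a Z; rewrite /= -!catA /= => -> //.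
apply/(@in_Kp_sandwich_move [:: a] X a (Y ++ Z)).
- by move: hs; rewrite !size_cat /= ?size_cat /=; lia.
- by rewrite !(vvalid_cat, vvalid_cons) vX va vY vZ.
rewrite /sandwich !vword_cons (mulrA (v a)) hc_vsq // mul1r; apply: IHk.
  by move: hs; rewrite !size_cat /= ?size_cat /=; lia.
by rewrite !vvalid_cat vX vY vZ.
Qed.

Lemma in_Kp_sandwich_adjacent u a : size u = k.+2 -> vvalid u -> uniq u ->
  a \in u -> a.+1 \in u -> in_Kp p (sandwich u).
Proof.
move=> hs hv hu au; case/splitPr: au hs hv hu => X Y hs hv hu a1u.
have front := perm_to_front X a Y.
apply/(@in_Kp_sandwich_move [::] X a Y) => //=.
have : a.+1 \in X ++ Y by move: a1u; rewrite (perm_mem front) inE gtn_eqF.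
rewrite (perm_size front) (perm_vvalid front) (perm_uniq front) in hs hv hu.
rewrite vvalid_cons in hv; rewrite cons_uniq in hu.
case/andP: hv hu => va hv /andP [aW uW].
move: (X ++ Y) hs hv aW uW => W hs hv aW uW a1W.
case/splitPr: a1W hs hv aW uW => X' Y' hs hv aW uW.
have front' := perm_to_front X' a.+1 Y'.
rewrite (perm_vvalid front') (perm_uniq front') (perm_mem front') in hv aW uW.
rewrite vvalid_cons in hv; rewrite cons_uniq in uW.
case/andP: hv uW => va1 hv /andP [a1W uW].
rewrite inE negb_or in aW; case/andP: aW => _ aW.
apply/(@in_Kp_sandwich_move [:: a] X' a.+1 Y') => //.
  by rewrite cat1s vvalid_cons va (perm_vvalid front') vvalid_cons va1.
apply: in_Kp_sandwich_pair => //; first by case/andP: va => ->.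
by apply: IHk => //; move: hs; rewrite /= (perm_size front') /=; lia.
Qed.

Lemma in_Kp_sandwich_lt u a b : size u = k.+2 -> vvalid u -> uniq u ->
  a \in u -> b \in u -> (a < b)%N -> in_Kp p (sandwich u).
Proof.
(* Induction on the gap b - a, raising a while a.+1 does not occur in u. *)
move=> hs hv hu au bu ab; have [d b_def] : exists d, b = (a + d.+1)%N.
  by exists (b - a).-1; lia.
rewrite {b ab}b_def in bu; elim: d u a hs hv hu au bu => [|d IHd] u a hs hv hu au bu.
all: have [a1u|a1u] := boolP (a.+1 \in u); first exact: in_Kp_sandwich_adjacent a1u.
  by rewrite addn1 (negPf a1u) in bu.
have a_n : (a < n)%N by have := allP hv _ bu; lia.
have a_pos : (1 <= a)%N by have := allP hv _ au; lia.
rewrite (@sandwich_raise a) ?a_pos //; apply: (IHd _ a.+1).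
- by rewrite size_map.
- exact: vvalid_raise.
- exact: uniq_raise.
- by apply/mapP; exists a; rewrite // /raise eqxx.
- by apply/mapP; exists (a + d.+2)%N; rewrite // /raise ifN_eq ?addSnnS //; lia.
Qed.

Lemma in_Kp_sandwich_step u : size u = k.+2 -> vvalid u -> in_Kp p (sandwich u).
Proof.
move=> hs hv; have [hu | /not_uniq_split [X [a [Y [Z u_def]]]]] := boolP (uniq u).
  case: u hs hv hu => [|x [|y r]] // hs hv hu.
  have xy : x != y by move: hu; rewrite cons_uniq in_cons negb_or => /andP [/andP []].
  have [xu yu] : x \in [:: x, y & r] /\ y \in [:: x, y & r] by rewrite !inE !eqxx orbT.
  case: (ltngtP x y) => [x_lt_y | y_lt_x | x_eq_y]; last by rewrite x_eq_y eqxx in xy.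
    exact: in_Kp_sandwich_lt hs hv hu xu yu x_lt_y.
  exact: in_Kp_sandwich_lt hs hv hu yu xu y_lt_x.
by rewrite u_def in hs hv *; apply: in_Kp_sandwich_dup.
Qed.

End Reduction.

Hypothesis pp : p * p = p.

Lemma in_Kp_sandwich_even m u : size u = (2 * m)%N -> vvalid u -> in_Kp p (sandwich u).
Proof.
elim: m u => [|m IHm] u hs hv.
  move/size0nil: hs => ->; exists 1.
  by rewrite /sandwich /vword big_nil mulr1 pp scale1r.
by apply: (in_Kp_sandwich_step IHm) => //; rewrite hs; lia.
Qed.

Lemma in_Kp_mul_vspan m y : vspan (2 * m)%N y -> in_Kp p (p * y).
Proof.
move=> [s [hs ->]]; rewrite mulr_sumr big_seq.
apply: (big_ind (in_Kp p)) => [|x z|cu /(allP hs) /andP [/eqP hsz hv]].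
- exact: in_Kp0.
- exact: in_KpD.
- by rewrite -scalerAr mulrA; apply/in_KpZ/(in_Kp_sandwich_even hsz).
Qed.

Lemma in_Kp_mul_Gn0 x : in_Gn0 n t v x -> in_Kp p (p * x * p).
Proof.
move=> [s [hs ->]]; rewrite mulr_sumr mulr_suml.
elim: s hs => [_|[c w] s IHs /andP [/andP [hw hev] hs]].
  by rewrite big_nil; exact: in_Kp0.
rewrite big_cons; apply: in_KpD (IHs hs).
rewrite -scalerAr -scalerAl -mulrA; apply/in_KpZ/(@in_Kp_mul_vspan (count hc_isV w)./2).
by rewrite mul2n even_halfK //; apply: vspan_hc_eval.
Qed.

End Sandwich.

Lemma hecke_eigen_minimal : in_Hn n t v p -> p * p = p -> minimal_in_Gn0 n t v p.
Proof.
move=> pH pp y; split => [[x [xG ->]] | [c ->]].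
  exact: (@in_Kp_mul_Gn0 (hecke_eigen_right pH) pp x xG).
exists (c *: 1); split; last by rewrite -scalerAr mulr1 -scalerAl pp.
by exists [:: (c, [::])]; rewrite /= big_seq1 /hc_eval big_nil.
Qed.

End Eigenvector.

End HeckeClifford.

Lemma hc_relations_oppV (K : fieldType) (A : algType K) n (t v : nat -> A) (q : K) :
  hc_relations n t v q -> hc_relations n t v (- q^-1).
Proof.
have qE : - q^-1 - (- q^-1)^-1 = q - q^-1 by rewrite invrN invrK opprK addrC.
by rewrite /hc_relations qE.
Qed.

Theorem lemma2p17 (R : realType) (A : algType R[i]) (n : nat)
    (t v : nat -> A) (q : R[i]) :
  q != 0 ->
  (forall j : nat, (2 <= j <= n)%N -> q ^+ (2 * j) != 1) ->
  hc_relations n t v q ->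
  (forall p : A, in_Hn n t v p -> p * p = p ->
     (forall j : nat, (1 <= j < n)%N -> t j * p = q *: p) ->
     minimal_in_Gn0 n t v p) /\
  (forall p : A, in_Hn n t v p -> p * p = p ->
     (forall j : nat, (1 <= j < n)%N -> t j * p = (- q^-1) *: p) ->
     minimal_in_Gn0 n t v p).
Proof.
move=> q_neq0 q_not_root rels; split=> p pH pp tp.
  exact: hecke_eigen_minimal tp pH pp.
apply: (hecke_eigen_minimal (hc_relations_oppV rels)) tp pH pp.
  by rewrite oppr_eq0 invr_eq0.
by move=> j hj; rewrite exprM sqrrN -exprM exprVn invr_eq1 q_not_root.
Qed.
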